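(* For every integer $n\ge1$ there is an rpoNFA $\mathcal{A}_n$ over an $n$-letter alphabet with $n(n+2)$ states such that the shortest word not accepted by $\mathcal{A}_n$ has length $\binom{2n}{n}-1$. Consequently, every DFA accepting $L(\mathcal{A}_n)$ has at least $\binom{2n}{n}$ states.
   Context: A poNFA is an NFA whose reachability relation ($p\le q$ iff $q\in p\cdot w$ for some word $w$) is a partial order; an rpoNFA is a poNFA such that for every state $q$ and letter $a$, $q\in q\cdot a$ implies $q\cdot a=\{q\}$. *)

From mathcomp Require Import all_boot.
Set Implicit Arguments. Unset Strict Implicit. Unset Printing Implicit Defensive.

Record nfa (n : nat) := NFA {
  nstate : finType;
  ntrans : nstate -> 'I_n -> {set nstate};
  ninit  : {set nstate};
  nfinal : {set nstate} }.

Fixpoint nreach n (A : nfa n) (X : {set nstate A}) (w : seq 'I_n) : {set nstate A} :=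
  match w with
  | [::] => X
  | a :: w' => nreach (\bigcup_(q in X) ntrans q a) w'
  end.

Definition nstep n (A : nfa n) (q : nstate A) (w : seq 'I_n) := nreach [set q] w.

Definition naccepts n (A : nfa n) (w : seq 'I_n) : bool :=
  nreach (ninit A) w :&: nfinal A != set0.

Definition nreachable n (A : nfa n) (p q : nstate A) : Prop :=
  exists w : seq 'I_n, q \in nstep p w.

(* poNFA: the reachability relation is a partial order (it is always
   reflexive and transitive; so this is antisymmetry) *)
Definition poNFA n (A : nfa n) : Prop :=
  forall p q : nstate A, nreachable p q -> nreachable q p -> p = q.

Definition rpoNFA n (A : nfa n) : Prop :=
  poNFA A /\ forall (q : nstate A) (a : 'I_n), q \in ntrans q a -> ntrans q a = [set q].

Record dfa (n : nat) := DFA {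
  dstate : finType;
  dtrans : dstate -> 'I_n -> dstate;
  dinit  : dstate;
  dfinal : {set dstate} }.

Definition daccepts n (D : dfa n) (w : seq 'I_n) : bool :=
  foldl (@dtrans n D) (dinit D) w \in dfinal D.

From mathcomp Require Import all_boot zify.
Set Implicit Arguments. Unset Strict Implicit. Unset Printing Implicit Defensive.

(* States are pairs (l, s): column l at level s <= n, level n.+1 being an
   absorbing accepting sink.  Starting with every column at level 0, a word
   that avoids the sink reaches exactly one state per column, i.e. a
   nonincreasing configuration c : 'I_n -> nat.  A letter a either sends the
   run to the sink, or, if column a is not full and all columns below it are,
   lifts columns 0..a to level c a + 1.  The potential
   \sum_j 'C(n - c j + j, j.+1) drops by exactly one at every such step; it
   equals 'C(2n, n) - 1 initially and vanishes exactly at the full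
   configuration, the only non-accepting one.  So the rejected words are
   exactly the complete runs, all of length 'C(2n, n) - 1.  A DFA reading a
   shortest rejected word visits pairwise distinct states, since cutting out a
   loop would give a shorter rejected word. *)

Lemma bin_diag_sum h j : 'C(h + j, j) = (\sum_(i < j) 'C(h + i, i.+1)).+1.
Proof.
elim: j => [|j IHj]; first by rewrite addn0 bin0 big_ord0.
by rewrite big_ord_recr /= addnS binS IHj addnS addnC.
Qed.

Section CounterNFA.

Variable n : nat.

Definition state : finType := ('I_n * 'I_n.+2)%type.

Definition sink (q : state) : bool := q.2 == n.+1 :> nat.

Definition trans (q : state) (a : 'I_n) : {set state} :=
  if sink q || (a < q.1) then [set q]
  else if a == q.1 then
    if q.2 < n then [set q' : state | (q'.1 <= q.1) && (q'.2 == q.2.+1 :> nat)]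
    else [set (q.1, ord_max)]
  else if a == q.1.+1 :> nat then
    if q.2 < n then [set (q.1, ord_max)] else set0
  else set0.

Definition counter_nfa : nfa n :=
  NFA trans [set q : state | q.2 == 0 :> nat]
    [set q : state | sink q || (q.1 == n.-1 :> nat) && (q.2 < n)].

Definition climb (q q' : state) : bool := (q' == q) || (q.2 < q'.2).

Lemma climb_trans : transitive climb.
Proof.
move=> q p r /orP[/eqP-> //|lt_pq] /orP[/eqP-> //|lt_qr].
by rewrite /climb (ltn_trans lt_pq lt_qr) orbT.
Qed.

Lemma trans_climb q a q' : q' \in trans q a -> climb q q'.
Proof.
rewrite /trans /climb /sink; case: ifP => [_|/norP[top _]]; first by rewrite inE => ->.
have := ltn_ord q.2; case: ifP => _ lt_q2.
  case: ifP => _; first by rewrite inE => /andP[_ /eqP->]; rewrite ltnSn orbT.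
  by rewrite inE => /eqP-> /=; rewrite ltn_neqAle top -ltnS lt_q2 orbT.
case: ifP => _; last by rewrite inE.
case: ifP => lt_q2n; last by rewrite inE.
by rewrite inE => /eqP-> /=; rewrite (ltn_trans lt_q2n) ?orbT.
Qed.

Lemma nreach_climb (X : {set state}) w q' :
  q' \in nreach (A := counter_nfa) X w -> exists2 q, q \in X & climb q q'.
Proof.
elim: w X => [|a w IHw] X /=; first by exists q'; rewrite // /climb eqxx.
case/IHw=> p /bigcupP[q Xq /trans_climb climb_qp] climb_pq'.
by exists q; last exact: climb_trans climb_pq'.
Qed.

Lemma counter_rpo : rpoNFA counter_nfa.
Proof.
split=> [p q [u pu] [v qv]|q a].
  have [_ /set1P-> climb_pq] := nreach_climb pu.
  have [_ /set1P-> climb_qp] := nreach_climb qv.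
  case/orP: climb_pq => [/eqP-> //|lt_pq]; case/orP: climb_qp => [/eqP-> //|].
  by rewrite ltnNge (ltnW lt_pq).
rewrite /= /trans; case: ifP => // _; case: ifP => _.
  case: ifP => _ /[!inE]; last by move/eqP=> {1}<-.
  by case/andP=> _ /eqP; lia.
case: ifP => _; last by rewrite inE.
by case: ifP => _; rewrite inE // => /eqP {1}<-.
Qed.

Definition conf_states (c : 'I_n -> nat) : {set state} :=
  [set q : state | q.2 == c q.1 :> nat].

Definition conf_valid (c : 'I_n -> nat) : Prop :=
  (forall l, c l <= n) /\ {homo c : i j / i <= j >-> j <= i}.

Definition enabled (c : 'I_n -> nat) (a : 'I_n) : bool :=
  (c a < n) && [forall l : 'I_n, (l < a) ==> (c l == n)].

Definition full (c : 'I_n -> nat) : bool := [forall l, c l == n].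

Definition fire (c : 'I_n -> nat) (a : 'I_n) : 'I_n -> nat :=
  fun l => if l <= a then (c a).+1 else c l.

Fixpoint run (c : 'I_n -> nat) (w : seq 'I_n) : option ('I_n -> nat) :=
  if w is a :: w' then (if enabled c a then run (fire c a) w' else None)
  else Some c.

Lemma fire_valid c a : conf_valid c -> c a < n -> conf_valid (fire c a).
Proof.
move=> [le_cn anti_c] lt_can; split=> [l|i j le_ij]; rewrite /fire; first by case: ifP.
case: (leqP j a) => [le_ja|lt_aj]; first by rewrite (leq_trans le_ij le_ja).
case: ifP => _; last exact: anti_c.
exact: leq_trans (anti_c _ _ (ltnW lt_aj)) (leqnSn _).
Qed.

Lemma inord_in_conf_states c (l : 'I_n) : c l <= n ->
  (l, inord (c l)) \in conf_states c.
Proof. by move=> le_cn; rewrite inE /= inordK // !ltnS (leq_trans le_cn). Qed.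

Lemma trans_fire c a : conf_valid c -> enabled c a ->
  \bigcup_(q in conf_states c) trans q a = conf_states (fire c a).
Proof.
move=> [le_cn _] /andP[lt_can /forallP full_below].
apply/setP=> q'; apply/bigcupP/idP => [[q /[!inE] /eqP q2E]|].
  have no_sink : (c q.1 == n.+1) = false by have := le_cn q.1; lia.
  rewrite /trans /sink q2E no_sink /=.
  case: ifP => [lt_aq|_]; first by rewrite inE => /eqP->; rewrite /fire leqNgt lt_aq /= q2E.
  case: ifP => [/eqP aE|_]; first by rewrite -aE lt_can inE /fire => /andP[-> /eqP->].
  case: ifP => [/eqP aE|_]; last by rewrite inE.
  have /implyP/(_ _)/eqP-> := full_below q.1; first by rewrite ltnn inE.
  by rewrite aE.
rewrite inE /fire; case: leqP => [le_qa /eqP q'2E|lt_aq q'2E].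
  exists (a, inord (c a)); first exact: inord_in_conf_states.
  have no_sink : (c a == n.+1) = false by lia.
  by rewrite /trans /sink /= inordK ?no_sink ?ltnn ?eqxx ?lt_can ?inE ?le_qa ?q'2E; lia.
exists q'; first by rewrite inE.
by rewrite /trans lt_aq orbT inE.
Qed.

Lemma trans_disabled c a : conf_valid c -> ~~ enabled c a ->
  exists2 q, q \in \bigcup_(q in conf_states c) trans q a & sink q.
Proof.
move=> [le_cn anti_c]; rewrite negb_and -leqNgt => /orP[le_nca|].
  have caE : c a = n by apply/eqP; rewrite eqn_leq le_cn.
  exists (a, ord_max); rewrite /sink ?eqxx //.
  apply/bigcupP; exists (a, inord (c a)); first exact: inord_in_conf_states.
  by rewrite /trans /sink /= inordK caE ?(ltn_eqF (ltnSn n)) ?ltnn ?eqxx ?inE.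
case/forallPn=> l /[!negb_imply] /andP[lt_la cl_n].
have lt_pred_a : a.-1 < n by have := ltn_ord a; lia.
pose p := Ordinal lt_pred_a.
have lt_cpn : c p < n.
  apply: leq_ltn_trans (anti_c l p _) _; first by rewrite /p /=; lia.
  by rewrite ltn_neqAle cl_n le_cn.
exists (p, ord_max); rewrite /sink ?eqxx //.
apply/bigcupP; exists (p, inord (c p)); first exact/inord_in_conf_states/ltnW.
rewrite /trans /sink /= inordK; last lia.
have -> : (c p == n.+1) = false by lia.
have -> : (a < a.-1) = false by lia.
have -> : (a == p) = false by apply/eqP => /(congr1 val) /=; lia.
by rewrite prednK ?eqxx ?lt_cpn ?inE //; lia.
Qed.

Lemma nreach_sink (X : {set state}) w q :
  q \in X -> sink q -> q \in nreach (A := counter_nfa) X w.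
Proof.
elim: w X => [|a w IHw] X //= Xq sink_q; apply: IHw => //.
by apply/bigcupP; exists q; rewrite //= /trans sink_q inE.
Qed.

Lemma run_valid c w c' : conf_valid c -> run c w = Some c' -> conf_valid c'.
Proof.
elim: w c => [|a w IHw] c valid_c /=; first by case=> <-.
case: ifP => // /andP[lt_can _]; exact/IHw/fire_valid.
Qed.

Lemma nreach_run c w c' : conf_valid c -> run c w = Some c' ->
  nreach (A := counter_nfa) (conf_states c) w = conf_states c'.
Proof.
elim: w c => [|a w IHw] c valid_c /=; first by case=> ->.
case: ifP => // enabled_a; rewrite trans_fire //.
by case/andP: enabled_a => lt_can _; apply/IHw/fire_valid.
Qed.

Lemma nreach_run_None c w : conf_valid c -> run c w = None ->
  exists2 q, q \in nreach (A := counter_nfa) (conf_states c) w & sink q.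
Proof.
elim: w c => [|a w IHw] c valid_c //=.
case: ifP => [enabled_a|/negbT disabled_a _].
  by rewrite trans_fire //; case/andP: enabled_a => lt_can _; apply/IHw/fire_valid.
have [q q_in sink_q] := trans_disabled valid_c disabled_a.
by exists q; first exact: nreach_sink.
Qed.

Lemma conf_states_final c : conf_valid c ->
  (conf_states c :&: nfinal counter_nfa != set0) = ~~ full c.
Proof.
move=> [le_cn anti_c]; apply/set0Pn/forallPn => [[q /setIP[/[!inE] /eqP q2E]]|[l]].
  rewrite /sink q2E => /orP[/eqP|/andP[_ lt_cn]]; last by exists q.1; rewrite neq_ltn lt_cn.
  by have := le_cn q.1; lia.
move=> ne_cln; have lt_cln : c l < n by rewrite ltn_neqAle ne_cln le_cn.
have lt_pred_n : n.-1 < n by have := ltn_ord l; lia.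
pose p := Ordinal lt_pred_n.
have lt_cpn : c p < n.
  by apply: leq_ltn_trans (anti_c l p _) lt_cln; rewrite /p /=; have := ltn_ord l; lia.
exists (p, inord (c p)); rewrite inE inord_in_conf_states ?(ltnW lt_cpn) //=.
by rewrite inE /= inordK ?eqxx ?lt_cpn ?orbT //; lia.
Qed.

(* Each firing lowers the potential by one: Pascal's rule at column a, and
   bin_diag_sum for the columns below a, which go from full to level c a + 1. *)
Definition potential (c : 'I_n -> nat) : nat := \sum_(j < n) 'C(n - c j + j, j.+1).

Lemma potential_fire c a : conf_valid c -> enabled c a ->
  potential c = (potential (fire c a)).+1.
Proof.
move=> [le_cn _] /andP[lt_can /forallP full_below].
have full_lt (j : 'I_n) : j < a -> c j = n by move=> lt_ja; apply/eqP/(implyP (full_below j)).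
set h := n - (c a).+1.
have caE : n - c a = h.+1 by rewrite /h; lia.
rewrite /potential (bigID (fun j : 'I_n => j < a)) [in RHS](bigID (fun j : 'I_n => j < a)) /=.
rewrite big1 => [|j /full_lt->]; last by rewrite subnn bin_small.
have -> : \sum_(j < n | j < a) 'C(n - fire c a j + j, j.+1) = \sum_(i < a) 'C(h + i, i.+1).
  rewrite (big_ord_widen _ (fun i => 'C(h + i, i.+1)) (ltnW (ltn_ord a))).
  by apply: eq_bigr => j lt_ja; rewrite /fire ltnW.
rewrite (bigD1 a) ?ltnn // [in RHS](bigD1 a) ?ltnn //=.
rewrite [X in _ = (_ + (_ + X)).+1](eq_bigr (fun j => 'C(n - c j + j, j.+1))); last first.
  by move=> j /andP[ge_ja ne_ja]; rewrite /fire leq_eqVlt (negbTE ge_ja) orbF ifN.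
rewrite /fire leqnn -/h caE addSn binS bin_diag_sum add0n addnS addSn; congr _.+1.
by rewrite addnC addnA [RHS]addnC [X in X + _ = _]addnC.
Qed.

Lemma potential_run c w c' : conf_valid c -> run c w = Some c' ->
  potential c = potential c' + size w.
Proof.
elim: w c => [|a w IHw] c valid_c /=; first by case=> ->; rewrite addn0.
case: ifP => // enabled_a run_w; rewrite (potential_fire valid_c enabled_a) addnS.
by case/andP: enabled_a => lt_can _; rewrite (IHw _ (fire_valid valid_c lt_can)).
Qed.

Lemma potential_zero : potential (fun=> 0) = 'C(n.*2, n) - 1.
Proof.
rewrite -addnn bin_diag_sum subn1 /=.
by apply: eq_bigr => j _; rewrite subn0.
Qed.

Lemma potential_eq0 c : conf_valid c -> (potential c == 0) = full c.
Proof.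
move=> [le_cn _]; rewrite sum_nat_eq0 /full; apply: eq_forallb => l /=.
by rewrite -leqn0 leqNgt bin_gt0 -leqNgt; have := le_cn l; lia.
Qed.

Lemma run_to_full c : conf_valid c ->
  exists2 w, size w = potential c & exists2 c', run c w = Some c' & full c'.
Proof.
move: {2}(potential c) (erefl (potential c)) => k.
elim: k c => [|k IHk] c pot_c valid_c.
  by exists [::] => //; exists c; rewrite // -potential_eq0 // pot_c.
have [l lt_cln|full_c] := pickP (fun l => c l < n); last first.
  move: pot_c; have /eqP-> // : potential c == 0.
  rewrite potential_eq0 //; apply/forallP => l; have := full_c l; have := valid_c.1 l.
  by rewrite eqn_leq => -> /= /negbT; rewrite -leqNgt.
have [a lt_can min_a] := @arg_minnP _ l (fun i => c i < n) (fun i => nat_of_ord i) lt_cln.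
have enabled_a : enabled c a.
  rewrite /enabled lt_can; apply/forallP => j; apply/implyP => lt_ja.
  rewrite eqn_leq valid_c.1 leqNgt; apply/negP => /min_a; lia.
have valid_fire := fire_valid valid_c lt_can.
have pot_fire : potential (fire c a) = k.
  by move: pot_c; rewrite (potential_fire valid_c enabled_a) => -[].
have [w size_w run_w] := IHk _ pot_fire valid_fire.
by exists (a :: w); rewrite /= ?size_w ?pot_fire ?pot_c // enabled_a.
Qed.

Lemma conf_valid0 : conf_valid (fun=> 0).
Proof. by []. Qed.

Lemma ninit_conf_states : ninit counter_nfa = conf_states (fun=> 0).
Proof. by apply/setP => q; rewrite !inE. Qed.

Lemma naccepts_run w c' : run (fun=> 0) w = Some c' -> naccepts counter_nfa w = ~~ full c'.
Proof.
move=> run_w; rewrite /naccepts ninit_conf_states (nreach_run conf_valid0 run_w).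
exact/conf_states_final/(run_valid conf_valid0 run_w).
Qed.

Lemma naccepts_run_None w : run (fun=> 0) w = None -> naccepts counter_nfa w.
Proof.
move=> run_w; have [q q_in sink_q] := nreach_run_None conf_valid0 run_w.
by apply/set0Pn; exists q; rewrite ninit_conf_states inE q_in inE sink_q.
Qed.

Lemma rejected_size w : ~~ naccepts counter_nfa w -> size w = 'C(n.*2, n) - 1.
Proof.
case run_w: (run (fun=> 0) w) => [c'|]; last by rewrite naccepts_run_None.
rewrite (naccepts_run run_w) negbK -potential_eq0; last exact: run_valid conf_valid0 run_w.
by rewrite -potential_zero (potential_run conf_valid0 run_w) => /eqP->.
Qed.

Lemma shorter_accepted w : size w < 'C(n.*2, n) - 1 -> naccepts counter_nfa w.
Proof. by apply: contraTT => /rejected_size->; rewrite ltnn. Qed.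

Lemma exists_rejected : exists w, ~~ naccepts counter_nfa w /\ size w = 'C(n.*2, n) - 1.
Proof.
have [w size_w [c' run_w full_c']] := run_to_full conf_valid0.
by exists w; rewrite (naccepts_run run_w) full_c' size_w potential_zero.
Qed.

End CounterNFA.

Lemma shortest_rejected_lt_card n (D : dfa n) (L : pred (seq 'I_n)) w :
  (forall v, daccepts D v = L v) -> ~~ L w -> (forall v, size v < size w -> L v) ->
  size w < #|dstate D|.
Proof.
move=> DL Lw shortest.
have size_cut i j : i < j <= size w -> size (take i w ++ drop j w) < size w.
  by rewrite size_cat size_drop size_take; case: ifP; lia.
pose f (i : 'I_(size w).+1) := foldl (@dtrans n D) (dinit D) (take i w).
suff f_inj : injective f by have := leq_card f f_inj; rewrite card_ord.
have f_neq (i j : 'I_(size w).+1) : i < j -> f i != f j.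
  move=> lt_ij; apply/contraNneq: Lw => fij.
  have /shortest : size (take i w ++ drop j w) < size w by rewrite size_cut // lt_ij -ltnS ltn_ord.
  by rewrite -!DL /daccepts foldl_cat -/(f i) fij /f -foldl_cat cat_take_drop.
move=> i j fij; case: (ltngtP i j) => [/f_neq|/f_neq|/val_inj //]; by rewrite fij eqxx.
Qed.

Theorem mainTheorem15 :
  forall n : nat, 1 <= n ->
  exists A : nfa n,
    [/\ rpoNFA A,
        #|nstate A| = n * (n + 2),
        (exists w : seq 'I_n, ~~ naccepts A w /\ size w = 'C(n.*2, n) - 1),
        (forall w : seq 'I_n, size w < 'C(n.*2, n) - 1 -> naccepts A w)
      & (forall D : dfa n, (forall w, daccepts D w = naccepts A w) ->
           'C(n.*2, n) <= #|dstate D|)].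
Proof.
move=> n _; exists (counter_nfa n); split.
- exact: counter_rpo.
- by rewrite card_prod !card_ord addn2.
- exact: exists_rejected.
- exact: shorter_accepted.
move=> D DA; have [w [rej_w size_w]] := exists_rejected n.
suff : size w < #|dstate D| by rewrite size_w subn1 prednK // bin_gt0 -addnn leq_addr.
by apply: shortest_rejected_lt_card DA rej_w _ => v; rewrite size_w; apply: shorter_accepted.
Qed.
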